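(* Let $L$ and $K$ be complete lattices and suppose $L$ is a parametrisation of $K$ through a family $(f_i:L\to K)_{i\in I}$. Let $O:L\to L$ be an operator and $A$ an approximator of $O$ such that both $O$ and $A$ respect each $f_i$, and let $(x,y)$ be the $A$-well-founded fixpoint of $O$. Then: (1) for each $i\in I$, $(f_i(x),f_i(y))$ is the $A_{f_i}$-well-founded fixpoint of $O_{f_i}$; (2) if the $A_{f_i}$-well-founded fixpoint of $O_{f_i}$ is exact for every $i\in I$, then the $A$-well-founded fixpoint of $O$ is exact.
   Context: $L$ is a parametrisation of $K$ through $(f_i)_{i\in I}$ if each $f_i:L\to K$ is a surjective lattice morphism (i.e. $f_i(\bigvee X)=\bigvee f_i(X)$ and $f_i(\bigwedge X)=\bigwedge f_i(X)$ for all $X\subseteq L$) and for all $x,y\in L$: $x\leq y$ iff $f_i(x)\leq f_i(y)$ for all $i\in I$. $L^2$ carries the precision order $(x,y)\leq_p(u,v)$ iff $x\leq u$ and $v\leq y$; $(x,y)_1=x,(x,y)_2=y$; a pair $(x,y)$ is exact if $x=y$. An approximator of $O$ is a $\leq_p$-monotone $A:L^2\to L^2$ with $A(x,x)_1\leq O(x)\leq A(x,x)_2$ for all $x$, assumed symmetric ($A(x,y)_1=A(y,x)_2$). $O$ respects $f$ if $f(x)=f(y)$ implies $f(O(x))=f(O(y))$; $O_f$ is the unique operator with $O_f\circ f=f\circ O$. With $f^2(x,y)=(f(x),f(y))$, $A$ respects $f$ if $f^2(p)=f^2(q)$ implies $f^2(A(p))=f^2(A(q))$, and $A_f$ is the unique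 operator with $A_f\circ f^2=f^2\circ A$. For an operator $B$ on $M^2$ and $P$ on $M$, a partial $B$-stable fixpoint is $(x,y)$ with $x=\mathrm{lfp}(B(\cdot,y)_1)$, $y=\mathrm{lfp}(B(x,\cdot)_2)$; the $B$-well-founded fixpoint of $P$ is the $\leq_p$-least partial $B$-stable fixpoint. *)

Set Implicit Arguments.

Record complete_lattice := CompleteLattice {
  carrier :> Type;
  le : carrier -> carrier -> Prop;
  sup : (carrier -> Prop) -> carrier;
  inf : (carrier -> Prop) -> carrier;
  le_refl : forall x, le x x;
  le_trans : forall x y z, le x y -> le y z -> le x z;
  le_antisym : forall x y, le x y -> le y x -> x = y;
  sup_ub : forall (X : carrier -> Prop) x, X x -> le x (sup X);
  sup_least : forall (X : carrier -> Prop) z, (forall x, X x -> le x z) -> le (sup X) z;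
  inf_lb : forall (X : carrier -> Prop) x, X x -> le (inf X) x;
  inf_greatest : forall (X : carrier -> Prop) z, (forall x, X x -> le z x) -> le z (inf X)
}.

Arguments le {c} _ _.
Arguments sup {c} _.
Arguments inf {c} _.

Definition image {A B : Type} (f : A -> B) (X : A -> Prop) : B -> Prop :=
  fun b => exists a, X a /\ f a = b.

Definition lattice_morphism {L K : complete_lattice} (f : L -> K) : Prop :=
  (forall X : L -> Prop, f (sup X) = sup (image f X)) /\
  (forall X : L -> Prop, f (inf X) = inf (image f X)).

Definition surjective {A B : Type} (f : A -> B) : Prop := forall b, exists a, f a = b.

Definition parametrisation {L K : complete_lattice} {I : Type} (f : I -> L -> K) : Prop :=
  (forall i, surjective (f i) /\ lattice_morphism (f i)) /\
  (forall x y : L, le x y <-> (forall i, le (f i x) (f i y))).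

Definition le_p {L : complete_lattice} (p q : L * L) : Prop :=
  le (fst p) (fst q) /\ le (snd q) (snd p).

Definition exact {L : Type} (p : L * L) : Prop := fst p = snd p.

Definition approximator {L : complete_lattice} (O : L -> L) (A : L * L -> L * L) : Prop :=
  (forall p q, le_p p q -> le_p (A p) (A q)) /\
  (forall x, le (fst (A (x, x))) (O x) /\ le (O x) (snd (A (x, x)))) /\
  (forall x y, fst (A (x, y)) = snd (A (y, x))).

Definition respects {L K : Type} (f : L -> K) (O : L -> L) : Prop :=
  forall x y, f x = f y -> f (O x) = f (O y).

Definition f2 {L K : Type} (f : L -> K) (p : L * L) : K * K := (f (fst p), f (snd p)).

Definition respects2 {L K : Type} (f : L -> K) (A : L * L -> L * L) : Prop :=
  forall p q, f2 f p = f2 f q -> f2 f (A p) = f2 f (A q).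

(** Of is O_f, i.e. Of o f = f o O (unique since f is surjective). *)
Definition is_induced_op {L K : Type} (f : L -> K) (O : L -> L) (Of : K -> K) : Prop :=
  forall x, Of (f x) = f (O x).

Definition is_induced_approx {L K : Type} (f : L -> K) (A : L * L -> L * L)
  (Af : K * K -> K * K) : Prop :=
  forall p, Af (f2 f p) = f2 f (A p).

Definition is_lfp {M : complete_lattice} (g : M -> M) (x : M) : Prop :=
  g x = x /\ forall z, g z = z -> le x z.

Definition partial_stable {M : complete_lattice} (B : M * M -> M * M) (p : M * M) : Prop :=
  is_lfp (fun z => fst (B (z, snd p))) (fst p) /\
  is_lfp (fun z => snd (B (fst p, z))) (snd p).

(** p is the B-well-founded fixpoint of P: the <=_p-least partial B-stable fixpoint.
    (The operator P only enters through B being an approximator of it.) *)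
Definition well_founded_fixpoint {M : complete_lattice} (B : M * M -> M * M)
  (P : M -> M) (p : M * M) : Prop :=
  partial_stable B p /\ forall q, partial_stable B q -> le_p p q.

(** The well-founded fixpoint is the pair [(x, S x)] where [x] is the least
    fixpoint of the round [u |-> lfp B(., lfp B(u, .)_2)_1] of the two stable
    revisions and [S] is the upper revision.  A surjective complete-join morphism
    [f] carries least fixpoints of [g] to least fixpoints of any [gK] with
    [gK o f = f o g]: for a fixpoint [k] of [gK], the join of [f^-1(<= k)] is
    mapped onto [k] and is a prefixpoint of [g].  Applied to the two revisions
    and to the round, this sends the [A]-well-founded fixpoint to the
    [A_f]-well-founded one.  Exactness then follows because the [f_i] jointly
    reflect the order. *)
Set Implicit Arguments.

Definition monotone {M N : complete_lattice} (g : M -> N) : Prop :=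
  forall a b, le a b -> le (g a) (g b).

Definition precision_monotone {M : complete_lattice} (B : M * M -> M * M) : Prop :=
  forall p q, le_p p q -> le_p (B p) (B q).

Definition lfp {M : complete_lattice} (g : M -> M) : M := inf (fun z => le (g z) z).

Section LeastFixpoint.

Variables (M : complete_lattice) (g : M -> M).
Hypothesis g_mono : monotone g.

Lemma lfp_le_prefixpoint p : le (g p) p -> le (lfp g) p.
Proof. intros Hp. apply (inf_lb _ (fun z => le (g z) z)). exact Hp. Qed.

Lemma lfp_is_lfp : is_lfp g (lfp g).
Proof.
  assert (Hpre : le (g (lfp g)) (lfp g)).
  { apply inf_greatest. intros z Hz.
    apply le_trans with (g z); [apply g_mono, lfp_le_prefixpoint |]; exact Hz. }
  split.
  - apply le_antisym; [exact Hpre |].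
    apply lfp_le_prefixpoint, g_mono, Hpre.
  - intros z Hz. apply lfp_le_prefixpoint. rewrite Hz. apply le_refl.
Qed.

Lemma is_lfp_unique a b : is_lfp g a -> is_lfp g b -> a = b.
Proof. intros [Ha Ha_least] [Hb Hb_least]. apply le_antisym; auto. Qed.

Lemma is_lfp_le_prefixpoint x p : is_lfp g x -> le (g p) p -> le x p.
Proof.
  intros Hx Hp. rewrite (is_lfp_unique Hx lfp_is_lfp). apply lfp_le_prefixpoint. exact Hp.
Qed.

End LeastFixpoint.

Definition lower_revision {M : complete_lattice} (B : M * M -> M * M) (v : M) : M :=
  lfp (fun u => fst (B (u, v))).

Definition upper_revision {M : complete_lattice} (B : M * M -> M * M) (u : M) : M :=
  lfp (fun v => snd (B (u, v))).

Definition revision_round {M : complete_lattice} (B : M * M -> M * M) (u : M) : M :=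
  lower_revision B (upper_revision B u).

Section StableRevision.

Variables (M : complete_lattice) (B : M * M -> M * M).
Hypothesis B_mono : precision_monotone B.

Lemma lower_component_monotone v : monotone (fun u => fst (B (u, v))).
Proof. intros a b Hab. apply (@B_mono (a, v) (b, v)). split; [exact Hab | apply le_refl]. Qed.

Lemma upper_component_monotone u : monotone (fun v => snd (B (u, v))).
Proof. intros a b Hab. apply (@B_mono (u, b) (u, a)). split; [apply le_refl | exact Hab]. Qed.

Lemma lower_revision_is_lfp v : is_lfp (fun u => fst (B (u, v))) (lower_revision B v).
Proof. exact (lfp_is_lfp (lower_component_monotone v)). Qed.

Lemma upper_revision_is_lfp u : is_lfp (fun v => snd (B (u, v))) (upper_revision B u).
Proof. exact (lfp_is_lfp (upper_component_monotone u)). Qed.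

Lemma lower_revision_antitone v1 v2 :
  le v1 v2 -> le (lower_revision B v2) (lower_revision B v1).
Proof.
  intros Hv. apply lfp_le_prefixpoint.
  destruct (lower_revision_is_lfp v1) as [Hfix _]. cbv beta in Hfix.
  apply le_trans with (fst (B (lower_revision B v1, v1))); [| rewrite Hfix; apply le_refl].
  apply (@B_mono (lower_revision B v1, v2) (lower_revision B v1, v1)).
  split; [apply le_refl | exact Hv].
Qed.

Lemma upper_revision_antitone u1 u2 :
  le u1 u2 -> le (upper_revision B u2) (upper_revision B u1).
Proof.
  intros Hu. apply lfp_le_prefixpoint.
  destruct (upper_revision_is_lfp u1) as [Hfix _]. cbv beta in Hfix.
  apply le_trans with (snd (B (u1, upper_revision B u1))); [| rewrite Hfix; apply le_refl].
  apply (@B_mono (u1, upper_revision B u1) (u2, upper_revision B u1)).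
  split; [exact Hu | apply le_refl].
Qed.

Lemma revision_round_monotone : monotone (revision_round B).
Proof.
  intros a b Hab. apply lower_revision_antitone, upper_revision_antitone, Hab.
Qed.

Lemma partial_stable_iff u v :
  partial_stable B (u, v) <-> u = lower_revision B v /\ v = upper_revision B u.
Proof.
  split.
  - intros [Hu Hv]. split.
    + exact (is_lfp_unique Hu (lower_revision_is_lfp v)).
    + exact (is_lfp_unique Hv (upper_revision_is_lfp u)).
  - intros [-> Hv]. split; simpl.
    + apply lower_revision_is_lfp.
    + pose proof (upper_revision_is_lfp (lower_revision B v)) as Hup.
      rewrite <- Hv in Hup. exact Hup.
Qed.

Lemma partial_stable_revision_round u v :
  partial_stable B (u, v) -> revision_round B u = u /\ v = upper_revision B u.
Proof.
  intros Hs. apply partial_stable_iff in Hs as [Hu Hv].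
  split; [unfold revision_round; rewrite <- Hv; symmetry |]; assumption.
Qed.

Lemma well_founded_fixpoint_lfp_round (P : M -> M) x y :
  well_founded_fixpoint B P (x, y) ->
  is_lfp (revision_round B) x /\ y = upper_revision B x.
Proof.
  intros [Hs Hleast].
  destruct (partial_stable_revision_round Hs) as [Hround Hy].
  split; [split |]; [exact Hround | | exact Hy].
  intros z Hz.
  assert (Hzs : partial_stable B (z, upper_revision B z))
    by (apply partial_stable_iff; split; [symmetry; exact Hz | reflexivity]).
  exact (proj1 (Hleast _ Hzs)).
Qed.

End StableRevision.

Section Transfer.

Variables (L K : complete_lattice) (f : L -> K).
Hypotheses (f_surj : surjective f) (f_mono : monotone f)
  (f_sup : forall X : L -> Prop, f (sup X) = sup (image f X)).

Lemma sup_preimage_le k : le (f (sup (fun z => le (f z) k))) k.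
Proof. rewrite f_sup. apply sup_least. intros t [a [Ha <-]]. exact Ha. Qed.

Lemma lift_le a k : le (f a) k -> exists a', le a a' /\ f a' = k.
Proof.
  intros Hak. destruct (f_surj k) as [w Hw].
  exists (sup (fun t => t = a \/ t = w)).
  split; [apply sup_ub; left; reflexivity |].
  apply le_antisym.
  - rewrite f_sup. apply sup_least. intros t [u [[-> | ->] <-]]; [exact Hak |].
    rewrite Hw. apply le_refl.
  - rewrite <- Hw. apply f_mono, sup_ub. right. reflexivity.
Qed.

Lemma is_lfp_transfer (g : L -> L) (gK : K -> K) x :
  monotone g -> (forall z, gK (f z) = f (g z)) -> is_lfp g x -> is_lfp gK (f x).
Proof.
  intros g_mono Hcomm Hx. split.
  - rewrite Hcomm, (proj1 Hx). reflexivity.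
  - intros k Hk.
    set (z0 := sup (fun z => le (f z) k)).
    assert (Hz0 : f z0 = k).
    { apply le_antisym; [apply sup_preimage_le |].
      destruct (f_surj k) as [w Hw].
      apply le_trans with (f w); [rewrite Hw; apply le_refl |].
      apply f_mono, (sup_ub _ (fun z => le (f z) k)).
      rewrite Hw. apply le_refl. }
    assert (Hpre : le (g z0) z0).
    { apply (sup_ub _ (fun z => le (f z) k)).
      rewrite <- Hcomm, Hz0, Hk. apply le_refl. }
    rewrite <- Hz0. apply f_mono. exact (is_lfp_le_prefixpoint g_mono z0 Hx Hpre).
Qed.

Variables (A : L * L -> L * L) (Af : K * K -> K * K).
Hypotheses (A_mono : precision_monotone A) (Af_induced : is_induced_approx f A Af).

Lemma induced_approx_apply u v : Af (f u, f v) = (f (fst (A (u, v))), f (snd (A (u, v)))).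
Proof. exact (Af_induced (u, v)). Qed.

Lemma induced_approx_monotone : precision_monotone Af.
Proof.
  intros [k1 k2] [k3 k4] [H13 H42]; simpl in *.
  destruct (f_surj k1) as [a1 <-]. destruct (lift_le _ _ H13) as [a3 [Ha13 <-]].
  destruct (f_surj k4) as [a4 <-]. destruct (lift_le _ _ H42) as [a2 [Ha42 <-]].
  rewrite !induced_approx_apply.
  destruct (@A_mono (a1, a2) (a3, a4)) as [Hfst Hsnd]; [split; assumption |].
  split; apply f_mono; assumption.
Qed.

Lemma lower_revision_transfer v : f (lower_revision A v) = lower_revision Af (f v).
Proof.
  apply (is_lfp_unique (g := fun k => fst (Af (k, f v)))).
  - apply is_lfp_transfer with (g := fun u => fst (A (u, v))).
    + apply lower_component_monotone, A_mono.
    + intro z. rewrite induced_approx_apply. reflexivity.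
    + apply lower_revision_is_lfp, A_mono.
  - apply lower_revision_is_lfp, induced_approx_monotone.
Qed.

Lemma upper_revision_transfer u : f (upper_revision A u) = upper_revision Af (f u).
Proof.
  apply (is_lfp_unique (g := fun k => snd (Af (f u, k)))).
  - apply is_lfp_transfer with (g := fun v => snd (A (u, v))).
    + apply upper_component_monotone, A_mono.
    + intro z. rewrite induced_approx_apply. reflexivity.
    + apply upper_revision_is_lfp, A_mono.
  - apply upper_revision_is_lfp, induced_approx_monotone.
Qed.

Lemma revision_round_transfer u : f (revision_round A u) = revision_round Af (f u).
Proof.
  unfold revision_round. rewrite lower_revision_transfer, upper_revision_transfer. reflexivity.
Qed.

Lemma well_founded_fixpoint_transfer (O : L -> L) (Of : K -> K) x y :
  well_founded_fixpoint A O (x, y) -> well_founded_fixpoint Af Of (f x, f y).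
Proof.
  intros Hwf.
  destruct (well_founded_fixpoint_lfp_round A_mono Hwf) as [Hx Hy].
  assert (Hfx : is_lfp (revision_round Af) (f x)).
  { apply is_lfp_transfer with (g := revision_round A); [| | exact Hx].
    - apply revision_round_monotone, A_mono.
    - intro z. symmetry. apply revision_round_transfer. }
  assert (Hfy : f y = upper_revision Af (f x)) by (rewrite Hy; apply upper_revision_transfer).
  split.
  - apply (partial_stable_iff induced_approx_monotone). split; [| exact Hfy].
    rewrite Hfy. symmetry. exact (proj1 Hfx).
  - intros [k1 k2] Hk.
    destruct (partial_stable_revision_round induced_approx_monotone Hk) as [Hk1 Hk2].
    assert (Hle : le (f x) k1) by exact (proj2 Hfx _ Hk1).
    split; [exact Hle |]. simpl. rewrite Hk2, Hfy.
    apply upper_revision_antitone; [exact induced_approx_monotone | exact Hle].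
Qed.

End Transfer.

Lemma parametrisation_monotone (L K : complete_lattice) (I : Type) (f : I -> L -> K) i :
  parametrisation f -> monotone (f i).
Proof. intros [_ Hrefl] a b Hab. exact (proj1 (Hrefl a b) Hab i). Qed.

Lemma parametrisation_eq (L K : complete_lattice) (I : Type) (f : I -> L -> K) :
  parametrisation f -> forall a b, (forall i, f i a = f i b) -> a = b.
Proof.
  intros [_ Hrefl] a b Hab.
  apply le_antisym; apply Hrefl; intro i; rewrite Hab; apply le_refl.
Qed.

Theorem theorem3p6 (L K : complete_lattice) (I : Type) (f : I -> L -> K)
  (O : L -> L) (A : L * L -> L * L)
  (Of : I -> K -> K) (Af : I -> K * K -> K * K) (x y : L) :
  parametrisation f ->
  approximator O A ->
  (forall i, respects (f i) O) ->
  (forall i, respects2 (f i) A) ->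
  (forall i, is_induced_op (f i) O (Of i)) ->
  (forall i, is_induced_approx (f i) A (Af i)) ->
  well_founded_fixpoint A O (x, y) ->
  (forall i, well_founded_fixpoint (Af i) (Of i) (f i x, f i y)) /\
  ((forall i (p : K * K), well_founded_fixpoint (Af i) (Of i) p -> exact p) ->
   exact (x, y)).
Proof.
  intros Hpar [A_mono _] _ _ _ Hind Hwf.
  assert (Hwf_i : forall i, well_founded_fixpoint (Af i) (Of i) (f i x, f i y)).
  { intro i. destruct (proj1 Hpar i) as [Hsurj [Hsup _]].
    exact (well_founded_fixpoint_transfer Hsurj (parametrisation_monotone i Hpar)
             Hsup A_mono (Hind i) (Of i) Hwf). }
  split; [exact Hwf_i |].
  intros Hexact. apply (parametrisation_eq Hpar). intro i. exact (Hexact i _ (Hwf_i i)).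
Qed.
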